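(* Let $\varepsilon>0$, $\delta\in(0,1)$, $\Delta>0$, and let $v$ be a real-valued function on datasets with sensitivity $\Delta$, i.e. $|v(D)-v(D')|\le\Delta$ for all neighboring datasets $D,D'$. Let $q_\delta$ denote the absolute value of the $\delta$-quantile of the Laplace distribution $\mathrm{Lap}(\Delta/\varepsilon)$, and set $\tau:=\Delta+q_\delta$. Consider the PositiveLaplaceMechanism which, on dataset $D$, samples $\eta\sim\mathrm{Lap}(\Delta/\varepsilon)$, sets $\tilde v:=v(D)+\tau+\eta$, and outputs $\max(v(D),\tilde v)$. Then this mechanism is $(\varepsilon,\delta)$-differentially private.
   Context: $\mathrm{Lap}(b)$ is the Laplace distribution with mean $0$ and scale $b$, density $\frac{1}{2b}e^{-|x|/b}$. The $\phi$-quantile of a distribution is the value $x$ with $\Pr[X\le x]=\phi$. Two datasets are neighboring if they differ by replacing the contribution of one individual. A randomized algorithm $M$ is $(\varepsilon,\delta)$-differentially private if for every pair of neighboring datasets $D,D'$ and every measurable set $S$, $\Pr[M(D)\in S]\le e^{\varepsilon}\Pr[M(D')\in S]+\delta$ and symmetrically with $D,D'$ swapped. *)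

From HB Require Import structures.
From mathcomp Require Import all_boot all_order all_algebra.
From mathcomp Require Import all_classical all_reals all_analysis.
Set Implicit Arguments. Unset Strict Implicit. Unset Printing Implicit Defensive.
Import Order.TTheory GRing.Theory Num.Theory.
Import numFieldNormedType.Exports.
Local Open Scope classical_set_scope.
Local Open Scope ring_scope.

Definition laplace_pdf (R : realType) (b : R) (x : R) : R :=
  (2 * b)^-1 * expR (- (`|x| / b)).

Definition laplace_prob (R : realType) (b : R) (A : set R) : \bar R :=
  (\int[@lebesgue_measure R]_(x in A) (laplace_pdf b x)%:E)%E.

Definition plm_output (R : realType) (vD tau eta : R) : R :=
  Num.max vD (vD + tau + eta).

Definition plm_prob (R : realType) (b vD tau : R) (S : set R) : \bar R :=
  laplace_prob b (plm_output vD tau @^-1` S).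

Definition differentially_private (R : realType) (Dset : Type)
  (nb : Dset -> Dset -> Prop) (P : Dset -> set R -> \bar R) (eps delta : R) : Prop :=
  forall D D', nb D D' -> forall S : set R, measurable S ->
    (P D S <= (expR eps)%:E * P D' S + delta%:E)%E /\
    (P D' S <= (expR eps)%:E * P D S + delta%:E)%E.

From HB Require Import structures.
From mathcomp Require Import all_boot all_order all_algebra.
From mathcomp Require Import all_classical all_reals all_analysis measurable_realfun.
From mathcomp Require Import lra ring.
Import Order.TTheory GRing.Theory Num.Theory.
Import numFieldNormedType.Exports.
Local Open Scope classical_set_scope.
Local Open Scope ring_scope.

(* Let b = Delta / eps, q = |xq|, tau = Delta + q, u = v D, u' = v D' and
   m = max u u'.  When the noise satisfies x >= -q, the noisy value
   u + tau + x is at least u + Delta >= m, so it is the output; otherwise x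
   lies in the tail x < -q <= xq, of probability at most delta.  On the first
   event, translating the noise by u' - u turns the output on D into the same
   output on D', while the Laplace density changes by a factor at most
   exp(|u' - u| / b) <= exp(Delta / b) = exp(eps). *)

Lemma measurable_preimageT {d d'} {T : measurableType d} {U : measurableType d'}
    (f : T -> U) (Y : set U) :
  measurable_fun setT f -> measurable Y -> measurable (f @^-1` Y).
Proof. by move=> mf mY; rewrite -[_ @^-1` _]setTI; exact: mf. Qed.

Lemma ge0_integral_setU_le {d} {T : measurableType d} {R : realType}
    (mu : {measure set T -> \bar R}) (A B : set T) (f : T -> \bar R) :
  measurable A -> measurable B -> measurable_fun (A `|` B) f ->
  (forall x, (A `|` B) x -> 0 <= f x)%E ->
  (\int[mu]_(x in A `|` B) f x <=
   \int[mu]_(x in A) f x + \int[mu]_(x in B) f x)%E.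
Proof.
move=> mA mB mf f0.
have mAB : measurable (A `|` B) by exact: measurableU.
have mBA : measurable ((A `|` B) `\` A) by exact: measurableD.
rewrite -[in X in (X <= _)%E](setDUK (@subsetUl _ A B)).
rewrite ge0_integral_setU ?setDUK //; last by rewrite /disj_set setDIK.
apply: leeD => //; apply: ge0_subset_integral => //.
- exact: measurable_funS mf.
- by move=> x Bx; apply: f0; right.
- by move=> x [[]].
Qed.

Section lebesgue_translation.
Context {R : realType}.
Local Notation mu := lebesgue_measure.

Lemma measurable_fun_addr (c : R) :
  measurable_fun setT ((fun x => x + c) : measurableTypeR R -> measurableTypeR R).
Proof. exact: measurable_funD. Qed.

Lemma lebesgue_measure_addr_preimage (c : R) (A : set R) : measurable A ->
  mu ((fun x => x + c) @^-1` A) = mu A.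
Proof.
move=> mA.
pose nu := pushforward mu ((fun x => x + c) : _ -> measurableTypeR R).
apply/esym; apply: (lebesgue_measure_unique (mu := nu)) => //; first exact: measurable_fun_addr.
move=> ? _ [[a b] _ <-].
change (mu `]a, b] = mu ((fun x => x + c) @^-1` `]a, b])).
have -> : ((fun x => x + c) @^-1` `]a, b]) = `](a - c), (b - c)]%classic.
  by apply/seteqP; split => x /=; rewrite !in_itv /= ltrBlDr lerBrDr.
rewrite !lebesgue_measure_itv /= !lte_fin ltrD2r.
by case: ifP => // _; congr (_%:E); lra.
Qed.

Lemma ge0_integral_addr (c : R) (A : set R) (f : R -> \bar R) :
  measurable A -> measurable_fun A f -> (forall x, A x -> 0 <= f x)%E ->
  (\int[mu]_(x in A) f x =
   \int[mu]_(x in (fun x => x + c)%R @^-1` A) f (x + c)%R)%E.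
Proof.
move=> mA mf f0.
rewrite -(ge0_integral_pushforward (measurable_fun_addr c) mu mA mf); last first.
  by move=> x /[!inE]; exact: f0.
apply: eq_measure_integral; first exact: measurable_fun_addr.
by move=> ? B mB _; exact/esym/lebesgue_measure_addr_preimage.
Qed.

End lebesgue_translation.

Section laplace_distribution.
Context {R : realType} {b : R}.
Hypothesis b_gt0 : 0 < b.
Local Notation mu := lebesgue_measure.

Lemma laplace_pdf_ge0 (x : R) : 0 <= laplace_pdf b x.
Proof. by rewrite mulr_ge0 ?expR_ge0 // invr_ge0 mulr_ge0 // ltW. Qed.

Lemma measurable_laplace_pdf : measurable_fun setT (laplace_pdf b).
Proof.
apply: measurable_funM; first exact: measurable_cst.
apply: measurableT_comp; first exact: measurable_expR.
apply: measurableT_comp; first exact: oppr_measurable.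
apply: measurable_funM; [exact: normr_measurable | exact: measurable_cst].
Qed.

Let laplace_pdf_EFin_ge0 (D : set R) (x : R) : D x -> (0 <= (laplace_pdf b x)%:E)%E.
Proof. by rewrite lee_fin laplace_pdf_ge0. Qed.

Let measurable_laplace_pdf_EFin (A : set R) :
  measurable_fun A (fun x => (laplace_pdf b x)%:E).
Proof. by apply/measurable_EFinP; exact: measurable_funS measurable_laplace_pdf. Qed.

Lemma laplace_prob_ge0 (A : set R) : (0 <= laplace_prob b A)%E.
Proof. by apply: integral_ge0 => x; exact: laplace_pdf_EFin_ge0. Qed.

Lemma le_laplace_prob (A B : set R) : measurable A -> measurable B ->
  A `<=` B -> (laplace_prob b A <= laplace_prob b B)%E.
Proof.
move=> mA mB.
exact: (ge0_subset_integral mu mA mB (measurable_laplace_pdf_EFin B) (@laplace_pdf_EFin_ge0 B)).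
Qed.

Lemma laplace_prob_setU_le (A B : set R) : measurable A -> measurable B ->
  (laplace_prob b (A `|` B) <= laplace_prob b A + laplace_prob b B)%E.
Proof.
move=> mA mB.
exact: (ge0_integral_setU_le mu _ _ _ mA mB (measurable_laplace_pdf_EFin _) (@laplace_pdf_EFin_ge0 _)).
Qed.

Lemma laplace_pdf_addr_le (d x : R) :
  laplace_pdf b (x + d) <= expR (`|d| / b) * laplace_pdf b x.
Proof.
rewrite /laplace_pdf mulrCA ler_pM2l; last by rewrite invr_gt0 mulr_gt0.
rewrite -expRD ler_expR -mulrBl -mulNr ler_pM2r ?invr_gt0 //.
by have := ler_normD (x + d) (- d); rewrite addrK normrN; lra.
Qed.

Lemma laplace_prob_addr_le (d : R) (A : set R) : measurable A ->
  (laplace_prob b A <=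
   (expR (`|d| / b))%:E * laplace_prob b ((fun x => x + d)%R @^-1` A))%E.
Proof.
move=> mA; have mAd : measurable ((fun x => x + d) @^-1` A).
  by apply: measurable_preimageT => //; exact: measurable_fun_addr.
rewrite /laplace_prob (ge0_integral_addr d _ _ mA (measurable_laplace_pdf_EFin A)); last first.
  exact: laplace_pdf_EFin_ge0.
rewrite -(ge0_integralZl_EFin mu mAd (@laplace_pdf_EFin_ge0 _) (measurable_laplace_pdf_EFin _)
  (expR_ge0 _)).
apply: ge0_le_integral => //.
- by move=> x _; rewrite lee_fin laplace_pdf_ge0.
- apply/measurable_EFinP; apply: (measurable_funS measurableT) => //.
  exact: measurableT_comp measurable_laplace_pdf (measurable_fun_addr d).
- by apply: measurable_funeM; exact: measurable_laplace_pdf_EFin.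
- by move=> x _; rewrite lee_fin laplace_pdf_addr_le.
Qed.

End laplace_distribution.

Section positive_laplace_mechanism.
Context {R : realType}.

Lemma measurable_plm_output (u tau : R) : measurable_fun setT (plm_output u tau).
Proof.
apply: measurable_maxr; first exact: measurable_cst.
by apply: measurable_funD; [exact: measurable_cst | exact: measurable_id].
Qed.

Lemma plm_outputE (u tau x : R) : u <= u + tau + x -> plm_output u tau x = u + tau + x.
Proof. by move/max_idPr. Qed.

Lemma plm_prob_le (b Delta q u u' : R) (S : set R) :
  0 < b -> `|u - u'| <= Delta -> measurable S ->
  (plm_prob b u (Delta + q) S <=
   (expR (Delta / b))%:E * plm_prob b u' (Delta + q) S +
   laplace_prob b `]-oo, (- q)%R[)%E.
Proof.
move=> b_gt0 uu' mS; set tau := Delta + q.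
have max_le_uDelta : Num.max u u' <= u + Delta.
  by move: uu'; rewrite ler_norml ge_max => /andP[? ?]; apply/andP; split; lra.
pose G := (fun x => u + tau + x) @^-1` (S `&` `[Num.max u u', +oo[).
have mG : measurable G.
  apply: measurable_preimageT; last exact: measurableI.
  by apply: measurable_funD; [exact: measurable_cst | exact: measurable_id].
have G_tail : plm_output u tau @^-1` S `<=` G `|` `]-oo, (- q)%R[.
  move=> x /= Sx; have [mx|xq] := leP (Num.max u u') (u + tau + x).
    left; split; last by rewrite /= in_itv /= mx.
    by rewrite -plm_outputE // (le_trans _ mx) // le_max lexx.
  by right; rewrite /= in_itv /=; rewrite /tau in xq; lra.
have G_shift : (fun x => x + (u' - u)) @^-1` G `<=` plm_output u' tau @^-1` S.
  move=> x [] /=; rewrite in_itv /= andbT.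
  have -> : u + tau + (x + (u' - u)) = u' + tau + x by ring.
  by move=> Sx mx; rewrite plm_outputE // (le_trans _ mx) // le_max lexx orbT.
have mL : measurable `]-oo, (- q)%R[ by exact: measurable_itv.
have mGu' : measurable ((fun x => x + (u' - u)) @^-1` G).
  by apply: measurable_preimageT => //; exact: measurable_fun_addr.
have mP (w : R) : measurable (plm_output w tau @^-1` S).
  by apply: measurable_preimageT => //; exact: measurable_plm_output.
rewrite /plm_prob.
apply: le_trans (le_laplace_prob b_gt0 _ _ (mP u) (measurableU _ _ mG mL) G_tail) _.
apply: le_trans (laplace_prob_setU_le b_gt0 _ _ mG mL) _.
apply: leeD => //.
apply: le_trans (laplace_prob_addr_le b_gt0 (u' - u) _ mG) _.
apply: lee_pmul.
- by rewrite lee_fin expR_ge0.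
- exact: laplace_prob_ge0.
- by rewrite lee_fin ler_expR ler_pM2r ?invr_gt0 // distrC.
- exact: (le_laplace_prob b_gt0 _ _ mGu' (mP u') G_shift).
Qed.

End positive_laplace_mechanism.

Theorem theoremD1 (R : realType) (Dset : Type) (nb : Dset -> Dset -> Prop)
  (v : Dset -> R) (eps delta Delta xq : R) :
  0 < eps -> 0 < delta < 1 -> 0 < Delta ->
  (forall D D', nb D D' -> `|v D - v D'| <= Delta) ->
  (* xq is the delta-quantile of Lap(Delta/eps); q_delta = |xq| *)
  laplace_prob (Delta / eps) [set x | x <= xq] = delta%:E ->
  differentially_private nb
    (fun D => plm_prob (Delta / eps) (v D) (Delta + `|xq|)) eps delta.
Proof.
move=> eps_gt0 _ Delta_gt0 v_sens xq_quantile D D' nbDD' S mS.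
have b_gt0 : 0 < Delta / eps by rewrite divr_gt0.
have Delta_div_b : Delta / (Delta / eps) = eps by rewrite invf_div mulrA mulrC mulKf ?gt_eqF.
have tail_le_delta : (laplace_prob (Delta / eps) `]-oo, (- `|xq|)%R[ <= delta%:E)%E.
  rewrite -xq_quantile (_ : [set x | x <= xq] = `]-oo, xq]%classic); last first.
    by apply/seteqP; split => x /=; rewrite in_itv.
  apply: le_laplace_prob => //.
  move=> x /=; rewrite !in_itv /= => x_lt; have := ler_norm (- xq); rewrite normrN; lra.
have dp_dir (u u' : R) : `|u - u'| <= Delta ->
  (plm_prob (Delta / eps) u (Delta + `|xq|) S <=
   (expR eps)%:E * plm_prob (Delta / eps) u' (Delta + `|xq|) S + delta%:E)%E.
  move=> uu'; apply: le_trans (plm_prob_le _ _ `|xq| _ _ _ b_gt0 uu' mS) _.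
  by rewrite Delta_div_b leeD2l.
by split; apply: dp_dir; [exact: v_sens | rewrite distrC; exact: v_sens].
Qed.
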